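(* Let $\mathbb{K}$ be a field, $q\in\mathbb{K}^*$ not a root of unity, and $R=\mathcal{O}_q(M_3)$. Let $\sigma$ be a $\mathbb{K}$-algebra automorphism of $R$ such that $\sigma(Y_{i,\alpha})-Y_{i,\alpha}\in R_{\ge2}$ for all $(i,\alpha)\in\{1,2,3\}^2$, and let $[I|\Lambda]$ be a $t\times t$ quantum minor. Then $\sigma([I|\Lambda])-[I|\Lambda]\in R_{\ge t+1}$. Consequently, $\sigma([I|\Lambda])=[I|\Lambda]$ if and only if $\deg(\sigma([I|\Lambda]))=t$.
   Context: $\mathcal{O}_q(M_3)$ is the $\mathbb{K}$-algebra generated by $Y_{i,\alpha}$, $1\le i,\alpha\le 3$, subject to: $Y_{i,\beta}Y_{i,\alpha}=q^{-1}Y_{i,\alpha}Y_{i,\beta}$ for $\alpha<\beta$; $Y_{j,\alpha}Y_{i,\alpha}=q^{-1}Y_{i,\alpha}Y_{j,\alpha}$ for $i<j$; $Y_{j,\beta}Y_{i,\alpha}=Y_{i,\alpha}Y_{j,\beta}$ for $i<j$, $\alpha>\beta$; $Y_{j,\beta}Y_{i,\alpha}=Y_{i,\alpha}Y_{j,\beta}-(q-q^{-1})Y_{i,\beta}Y_{j,\alpha}$ for $i<j$, $\alpha<\beta$. It is $\mathbb{N}$-graded $R=\bigoplus R_i$ with each $Y_{i,\alpha}$ of degree 1; $R_{\ge d}=\bigoplus_{i\ge d}R_i$; for nonzero $x\in R$, $\deg(x)$ is the largest $d$ with nonzero component of $x$ in $R_d$. For $I=\{i_1<\dots<i_t\}$,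 $\Lambda=\{\alpha_1<\dots<\alpha_t\}\subseteq\{1,2,3\}$, the quantum minor is $[I|\Lambda]=\sum_{w\in S_t}(-q)^{l(w)}Y_{i_1,\alpha_{w(1)}}\cdots Y_{i_t,\alpha_{w(t)}}$. *)

From HB Require Import structures.
From mathcomp Require Import all_boot all_order all_fingroup all_algebra.
Set Implicit Arguments. Unset Strict Implicit. Unset Printing Implicit Defensive.
Import Order.TTheory GRing.Theory Num.Theory.
Local Open Scope ring_scope.

(* Generators are indexed by (i, alpha) in 'I_3 * 'I_3 (0-based: 'I_3 = {0,1,2}
   stands for {1,2,3}). *)
Section Rels.
Variables (K : fieldType) (A : algType K).
Definition qM3_rels (q : K) (Y : 'I_3 -> 'I_3 -> A) : Prop :=
  [/\ (forall (i a b : 'I_3), (a < b)%N ->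
         Y i b * Y i a = q^-1 *: (Y i a * Y i b)),
      (forall (i j a : 'I_3), (i < j)%N ->
         Y j a * Y i a = q^-1 *: (Y i a * Y j a)),
      (forall (i j a b : 'I_3), (i < j)%N -> (b < a)%N ->
         Y j b * Y i a = Y i a * Y j b) &
      (forall (i j a b : 'I_3), (i < j)%N -> (a < b)%N ->
         Y j b * Y i a = Y i a * Y j b - (q - q^-1) *: (Y i b * Y j a))].

End Rels.

Section QMat.
Variables (K : fieldType) (A : algType K).

Definition wprod (Y : 'I_3 -> 'I_3 -> A) (w : seq ('I_3 * 'I_3)) : A :=
  \prod_(p <- w) Y p.1 p.2.

Definition in_wspan (Y : 'I_3 -> 'I_3 -> A) (P : nat -> bool) (x : A) : Prop :=
  exists cs : seq (K * seq ('I_3 * 'I_3)),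
    all (fun c => P (size c.2)) cs /\ x = \sum_(c <- cs) c.1 *: wprod Y c.2.

Definition R_ge Y (d : nat) (x : A) : Prop := in_wspan Y (fun n => d <= n)%N x.
Definition R_le Y (d : nat) (x : A) : Prop := in_wspan Y (fun n => n <= d)%N x.
Definition R_lt Y (d : nat) (x : A) : Prop := in_wspan Y (fun n => n < d)%N x.

(* deg x = d : the largest degree with a nonzero homogeneous component is d,
   i.e. all components of degree > d vanish and the one of degree d does not. *)
Definition deg_is Y (x : A) (d : nat) : Prop :=
  x != 0 /\ R_le Y d x /\ ~ R_lt Y d x.

(* (A, Y) is a presentation of O_q(M_3): Y satisfies the relations, Y generates
   A as a K-algebra, and (A, Y) has the universal property. *)
Definition is_Oq_M3 (q : K) (Y : 'I_3 -> 'I_3 -> A) : Prop :=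
  [/\ qM3_rels q Y,
      (forall x : A, in_wspan Y predT x) &
      (forall (B : algType K) (Z : 'I_3 -> 'I_3 -> B), qM3_rels q Z ->
         exists f : {lrmorphism A -> B}, forall i a, f (Y i a) = Z i a)].

Definition sorted_idx (I : {set 'I_3}) : seq 'I_3 := [seq x <- enum 'I_3 | x \in I].

Definition perm_length t (w : 'S_t) : nat :=
  #|[set p : 'I_t * 'I_t | (p.1 < p.2)%N && (w p.2 < w p.1)%N]|.

Definition qminor (q : K) (Y : 'I_3 -> 'I_3 -> A) (I L : {set 'I_3}) : A :=
  \sum_(w : 'S_#|I|) ((- q) ^+ perm_length w) *:
     \prod_(k < #|I|) Y (nth ord0 (sorted_idx I) k) (nth ord0 (sorted_idx L) (w k)).

End QMat.

From HB Require Import structures.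
From mathcomp Require Import all_boot all_order all_fingroup all_algebra.
Set Implicit Arguments. Unset Strict Implicit. Unset Printing Implicit Defensive.
Import GRing.Theory.
Local Open Scope ring_scope.

(* Every term of the
   quantum minor [I|L] is a product of t generators, so applying sigma changes
   it only by terms of degree >= t + 1.  The minor is homogeneous of degree t
   and has degree exactly t: the specialization of R to K[X] sending the
   "diagonal" generators Y_{i_k, a_k} to X and all other generators to 0
   respects the relations and maps [I|L] to X^t.  Finally, if sigma([I|L]) has
   degree t, then sigma([I|L]) - [I|L] lies both in degree <= t and in degree
   >= t + 1; these two spans meet in 0 because the automorphism Y |-> q Y acts
   by q^d on words of length d and the q^d are pairwise distinct. *)

Section WordSpan.
Variables (K : fieldType) (A : algType K) (Y : 'I_3 -> 'I_3 -> A).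
Implicit Types (P Q S : nat -> bool) (x y : A).

Lemma in_wspan0 P : in_wspan Y P 0.
Proof. by exists [::]; rewrite big_nil. Qed.

Lemma in_wspanD P x y : in_wspan Y P x -> in_wspan Y P y -> in_wspan Y P (x + y).
Proof.
move=> [cs1 [P_cs1 ->]] [cs2 [P_cs2 ->]]; exists (cs1 ++ cs2).
by rewrite all_cat P_cs1 P_cs2 big_cat.
Qed.

Lemma in_wspanZ P (c : K) x : in_wspan Y P x -> in_wspan Y P (c *: x).
Proof.
move=> [cs [P_cs ->]]; exists [seq (c * e.1, e.2) | e <- cs]; split.
  by rewrite all_map; apply: sub_all P_cs => e.
by rewrite big_map scaler_sumr; apply: eq_bigr => e _; rewrite scalerA.
Qed.

Lemma in_wspanB P x y : in_wspan Y P x -> in_wspan Y P y -> in_wspan Y P (x - y).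
Proof. by move=> Px Py; rewrite -scaleN1r; apply/in_wspanD/in_wspanZ. Qed.

Lemma sub_in_wspan P Q x : (forall n, P n -> Q n) -> in_wspan Y P x -> in_wspan Y Q x.
Proof. by move=> PQ [cs [P_cs ->]]; exists cs; split=> //; apply: sub_all P_cs => e /PQ. Qed.

Lemma in_wspan_sum (T : eqType) (r : seq T) (F : T -> A) P :
  (forall i, i \in r -> in_wspan Y P (F i)) -> in_wspan Y P (\sum_(i <- r) F i).
Proof.
elim: r => [|i r IH] PF; first by rewrite big_nil; apply: in_wspan0.
rewrite big_cons; apply: in_wspanD; first by apply: PF; rewrite mem_head.
by apply: IH => j r_j; apply: PF; rewrite inE r_j orbT.
Qed.

Lemma in_wspan_word P (c : K) w : P (size w) -> in_wspan Y P (c *: wprod Y w).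
Proof. by move=> Pw; exists [:: (c, w)]; rewrite /= Pw big_seq1. Qed.

Lemma wprod_cons p w : wprod Y (p :: w) = Y p.1 p.2 * wprod Y w.
Proof. by rewrite /wprod big_cons. Qed.

Lemma wprod_cat w1 w2 : wprod Y (w1 ++ w2) = wprod Y w1 * wprod Y w2.
Proof. by rewrite /wprod big_cat. Qed.

Lemma in_wspanM P Q S x y : (forall m n, P m -> Q n -> S (m + n)%N) ->
  in_wspan Y P x -> in_wspan Y Q y -> in_wspan Y S (x * y).
Proof.
move=> PQS [cs1 [P_cs1 ->]] [cs2 [Q_cs2 ->]].
rewrite mulr_suml; apply: in_wspan_sum => c1 cs1_c1.
rewrite mulr_sumr; apply: in_wspan_sum => c2 cs2_c2.
rewrite -scalerAl -scalerAr scalerA -wprod_cat; apply: in_wspan_word.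
by rewrite size_cat; apply: PQS; [apply: (allP P_cs1) | apply: (allP Q_cs2)].
Qed.

Lemma in_wspan_gen P i a : P 1%N -> in_wspan Y P (Y i a).
Proof.
have -> : Y i a = 1 *: wprod Y [:: (i, a)] by rewrite /wprod big_seq1 scale1r.
exact: in_wspan_word.
Qed.

Lemma in_wspan_prod_gen n (fi fa : 'I_n -> 'I_3) :
  in_wspan Y (fun m => m == n) (\prod_(k < n) Y (fi k) (fa k)).
Proof.
elim: n fi fa => [|n IH] fi fa.
  rewrite big_ord0 (_ : 1 = 1 *: wprod Y [::]); first exact: in_wspan_word.
  by rewrite /wprod big_nil scale1r.
rewrite big_ord_recl; apply: (@in_wspanM (fun m => m == 1%N) (fun m => m == n)).
- by move=> a b /eqP -> /eqP ->.
- exact: in_wspan_gen.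
- exact: IH.
Qed.

End WordSpan.

Section Grading.
Variables (K : fieldType) (A : algType K) (Y : 'I_3 -> 'I_3 -> A) (q : K).
Hypotheses (q_neq0 : q != 0) (q_not_root1 : forall n : nat, (0 < n)%N -> q ^+ n != 1).
Variable g : {lrmorphism A -> A}.
Hypothesis gY : forall i a, g (Y i a) = q *: Y i a.

Lemma expr_q_inj m n : q ^+ m = q ^+ n -> m = n.
Proof.
wlog le_mn : m n / (m <= n)%N.
  by move=> W; case/orP: (leq_total m n) => /W // + /esym => /[apply] ->.
move=> e; have q_nm : q ^+ (n - m) = 1.
  by apply: (mulfI (expf_neq0 m q_neq0)); rewrite mulr1 -exprD subnKC.
apply/eqP; rewrite eqn_leq le_mn -subn_eq0 /=; apply/negPn; rewrite -lt0n.
by apply/negP => /q_not_root1; rewrite q_nm eqxx.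
Qed.

Lemma g_wprod w : g (wprod Y w) = q ^+ size w *: wprod Y w.
Proof.
elim: w => [|p w IH]; first by rewrite /wprod big_nil rmorph1 scale1r.
by rewrite wprod_cons rmorphM /= IH gY -scalerAl -scalerAr scalerA exprS.
Qed.

Lemma eigen_sum_eq0 (s : seq nat) (x : nat -> A) : uniq s ->
  (forall d, g (x d) = q ^+ d *: x d) -> \sum_(d <- s) x d = 0 ->
  forall d, d \in s -> x d = 0.
Proof.
elim: s x => [|d0 s IH] x //= /andP [s'd0 s_uniq] gx; rewrite big_cons => sum0.
(* Apply g - q^d0 to the relation: this kills x d0 and rescales the other terms. *)
pose x' d := (q ^+ d - q ^+ d0) *: x d.
have gx' d : g (x' d) = q ^+ d *: x' d by rewrite /x' linearZZ /= gx !scalerA mulrC.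
have sum'0 : \sum_(d <- s) x' d = 0.
  have := congr1 (fun z => g z - q ^+ d0 *: z) sum0.
  rewrite /= linear0 scaler0 subr0 linearD /= gx linear_sum scalerDr opprD addrACA.
  rewrite subrr add0r scaler_sumr -sumrB => sum'0; apply: etrans sum'0.
  by apply: eq_bigr => d _; rewrite /= gx /x' scalerBl.
have xs0 d : d \in s -> x d = 0.
  move=> s_d; move/eqP: (IH x' s_uniq gx' sum'0 d s_d).
  have d_neq : d != d0 by apply: contraNneq s'd0 => <-.
  rewrite scaler_eq0 subr_eq0 => /orP [/eqP /expr_q_inj /eqP|/eqP //].
  by rewrite (negbTE d_neq).
have x0 : x d0 = 0 by move: sum0; rewrite big_seq big1 ?addr0.
by move=> d; rewrite inE => /orP [/eqP -> | /xs0].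
Qed.

Definition hcomp d (cs : seq (K * seq ('I_3 * 'I_3))) : A :=
  \sum_(c <- cs | size c.2 == d) c.1 *: wprod Y c.2.

Lemma g_hcomp d cs : g (hcomp d cs) = q ^+ d *: hcomp d cs.
Proof.
rewrite linear_sum scaler_sumr; apply: eq_bigr => c /eqP size_c.
by rewrite linearZZ /= g_wprod size_c !scalerA mulrC.
Qed.

Lemma sum_hcomp N cs : all (fun c => size c.2 < N)%N cs ->
  \sum_(c <- cs) c.1 *: wprod Y c.2 = \sum_(d <- iota 0 N) hcomp d cs.
Proof.
move=> ltN; rewrite /hcomp.
under [RHS]eq_bigr => d _ do rewrite big_mkcond.
rewrite exchange_big big_seq_cond [RHS]big_seq_cond /=.
apply: eq_bigr => c /andP [cs_c _].
have iota_c : size c.2 \in iota 0 N by rewrite mem_iota add0n (allP ltN).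
rewrite (bigD1_seq _ iota_c (iota_uniq 0 N)) eqxx /= big1 ?addr0 //.
by move=> d; rewrite eq_sym => /negbTE ->.
Qed.

Lemma in_wspan_disjoint_eq0 (P Q : nat -> bool) x : (forall n, P n -> ~~ Q n) ->
  in_wspan Y P x -> in_wspan Y Q x -> x = 0.
Proof.
move=> PQ [cs1 [P_cs1 x_cs1]] [cs2 [Q_cs2 x_cs2]].
pose N := (\max_(c <- cs1 ++ cs2) size c.2).+1.
have /[!all_cat] /andP [/sum_hcomp x1 /sum_hcomp x2] :
    all (fun c => size c.2 < N)%N (cs1 ++ cs2).
  apply/allP => c cs_c; rewrite ltnS.
  exact: (leq_bigmax_seq (F := fun c => size c.2) c cs_c).
have hcomp_eq d : d \in iota 0 N -> hcomp d cs1 - hcomp d cs2 = 0.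
  apply: (@eigen_sum_eq0 _ (fun d => hcomp d cs1 - hcomp d cs2)).
  - exact: iota_uniq.
  - by move=> e; rewrite linearB /= !g_hcomp scalerBr.
  - by rewrite sumrB -x1 -x2 -x_cs1 -x_cs2 subrr.
rewrite x_cs1 x1 big_seq big1 // => d iota_d.
move/eqP: (hcomp_eq d iota_d); rewrite subr_eq0 => /eqP hcomp12.
case Pd : (P d).
  rewrite hcomp12 /hcomp big_seq_cond big1 // => c /andP [cs2_c /eqP size_c].
  by move: (allP Q_cs2 c cs2_c); rewrite /= size_c (negbTE (PQ d Pd)).
rewrite /hcomp big_seq_cond big1 // => c /andP [cs1_c /eqP size_c].
by move: (allP P_cs1 c cs1_c); rewrite /= size_c Pd.
Qed.

End Grading.

Lemma qM3_rels_scale (K : fieldType) (A : algType K) (q c : K) (Y : 'I_3 -> 'I_3 -> A) :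
  qM3_rels q Y -> qM3_rels q (fun i a => c *: Y i a).
Proof.
case=> rel_row rel_col rel_comm rel_cross; split.
- move=> i a b lt_ab; rewrite -!scalerAl -!scalerAr !scalerA rel_row // scalerA.
  by rewrite mulrC mulrA.
- move=> i j a lt_ij; rewrite -!scalerAl -!scalerAr !scalerA rel_col // scalerA.
  by rewrite mulrC mulrA.
- by move=> i j a b lt_ij lt_ba; rewrite -!scalerAl -!scalerAr !scalerA rel_comm.
- move=> i j a b lt_ij lt_ab; rewrite -!scalerAl -!scalerAr !scalerA rel_cross //.
  by rewrite scalerBr !scalerA [c * c * _]mulrC mulrA.
Qed.

Lemma is_Oq_M3_scale (K : fieldType) (A : algType K) (q : K) (Y : 'I_3 -> 'I_3 -> A) (c : K) :
  is_Oq_M3 q Y -> exists g : {lrmorphism A -> A}, forall i a, g (Y i a) = c *: Y i a.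
Proof. by case=> rels _ univ; apply/univ/qM3_rels_scale. Qed.

Lemma R_le_R_ge_eq0 (K : fieldType) (q : K) (A : algType K) (Y : 'I_3 -> 'I_3 -> A)
    (d : nat) (x : A) :
  q != 0 -> (forall n : nat, (0 < n)%N -> q ^+ n != 1) -> is_Oq_M3 q Y ->
  R_le Y d x -> R_ge Y d.+1 x -> x = 0.
Proof.
move=> q_neq0 q_not_root1 /(is_Oq_M3_scale q) [g gY].
apply: (in_wspan_disjoint_eq0 q_neq0 q_not_root1 gY) => n le_nd.
by rewrite -ltnNge ltnS.
Qed.

Section SigmaOnProducts.
Variables (K : fieldType) (A : algType K) (Y : 'I_3 -> 'I_3 -> A).
Variable sigma : {lrmorphism A -> A}.
Hypothesis sigmaY : forall i a : 'I_3, R_ge Y 2 (sigma (Y i a) - Y i a).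

Lemma R_ge_prod_gen n (fi fa : 'I_n -> 'I_3) : R_ge Y n (\prod_(k < n) Y (fi k) (fa k)).
Proof. by apply: sub_in_wspan (in_wspan_prod_gen Y fi fa) => m /eqP ->. Qed.

Lemma R_ge_prod_sigma_sub n (fi fa : 'I_n -> 'I_3) :
  R_ge Y n.+1 (\prod_(k < n) sigma (Y (fi k) (fa k)) - \prod_(k < n) Y (fi k) (fa k)).
Proof.
elim: n fi fa => [|n IH] fi fa; first by rewrite !big_ord0 subrr; apply: in_wspan0.
rewrite !big_ord_recl.
set a := sigma _; set b := Y _ _; set P' := \prod_(i < n) _; set P := \prod_(i < n) _.
have -> : a * P' - b * P = (a - b) * P' + b * (P' - P).
  by rewrite mulrBl mulrBr addrA subrK.
have ge_P' : R_ge Y n P'.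
  rewrite -(subrK P P'); apply: in_wspanD; last exact: R_ge_prod_gen.
  by apply: sub_in_wspan (IH _ _) => m /ltnW.
apply: in_wspanD.
  apply: (in_wspanM _ (sigmaY _ _) ge_P') => m m' le2m lenm'.
  by rewrite -addn2 addnC leq_add.
apply: (in_wspanM _ (@in_wspan_gen _ _ Y (fun m => 0 < m)%N _ _ isT) (IH _ _)).
by move=> m m' le1m lenm'; rewrite -add1n leq_add.
Qed.

End SigmaOnProducts.

Lemma nth_ord_inj (T : eqType) (x0 : T) (s : seq T) n (k k' : 'I_n) :
  size s = n -> uniq s -> nth x0 s k = nth x0 s k' -> k = k'.
Proof.
move=> size_s s_uniq e; apply/val_inj/eqP.
by rewrite -(nth_uniq x0 _ _ s_uniq) ?size_s ?ltn_ord // e.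
Qed.

Lemma sorted_nth_ltn_inv m n (x0 : 'I_m) (s : seq 'I_m) (k k' : 'I_n) :
  size s = n -> sorted (fun x y : 'I_m => (x < y)%N) s ->
  (nth x0 s k < nth x0 s k')%N -> (k < k')%N.
Proof.
move=> size_s s_sorted lt_nth; case: (ltngtP k k') => // [lt_k'k | eq_kk'].
  have := sorted_ltn_nth (fun y x z : 'I_m => @ltn_trans y x z) x0 s_sorted.
  move=> /(_ k' k); rewrite !inE size_s !ltn_ord => /(_ isT isT lt_k'k) lt_nth'.
  by have := ltn_trans lt_nth lt_nth'; rewrite ltnn.
by move: lt_nth; rewrite eq_kk' ltnn.
Qed.

Lemma sorted_idx_enum (I : {set 'I_3}) : sorted_idx I = enum I.
Proof. by rewrite /sorted_idx enumT /enum_mem. Qed.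

Lemma size_sorted_idx (I : {set 'I_3}) : size (sorted_idx I) = #|I|.
Proof. by rewrite sorted_idx_enum -cardE. Qed.

Lemma sorted_idx_uniq (I : {set 'I_3}) : uniq (sorted_idx I).
Proof. by rewrite sorted_idx_enum enum_uniq. Qed.

Lemma sorted_idx_sorted (I : {set 'I_3}) :
  sorted (fun x y : 'I_3 => (x < y)%N) (sorted_idx I).
Proof.
apply: sorted_filter; first exact: ltn_trans.
by have := iota_ltn_sorted 0 3; rewrite -val_enum_ord sorted_map.
Qed.

Lemma perm_length1 n : perm_length (1 : 'S_n) = 0%N.
Proof.
apply/eqP; rewrite cards_eq0; apply/eqP/setP => p; rewrite !inE !perm1.
by apply/negP => /andP [lt12 lt21]; have := ltn_trans lt12 lt21; rewrite ltnn.
Qed.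

Section DiagonalSpecialization.
Variables (K : fieldType) (q : K) (I L : {set 'I_3}).
Hypothesis card_LI : #|L| = #|I|.
Local Notation t := #|I|.
Local Notation idxI k := (nth ord0 (sorted_idx I) k).
Local Notation idxL k := (nth ord0 (sorted_idx L) k).

Definition diagX (i a : 'I_3) : {poly K} :=
  if [exists k : 'I_t, (i == idxI k) && (a == idxL k)] then 'X else 0.

Lemma diagX_0X i a : diagX i a = 0 \/ diagX i a = 'X.
Proof. by rewrite /diagX; case: ifP; [right | left]. Qed.

Lemma idxI_inj (k k' : 'I_t) : idxI k = idxI k' -> k = k'.
Proof. by apply: nth_ord_inj (sorted_idx_uniq I); rewrite size_sorted_idx. Qed.

Lemma idxL_inj (k k' : 'I_t) : idxL k = idxL k' -> k = k'.
Proof. by apply: nth_ord_inj (sorted_idx_uniq L); rewrite size_sorted_idx. Qed.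

Lemma diagX_neq0 i a : diagX i a != 0 -> exists k : 'I_t, i = idxI k /\ a = idxL k.
Proof.
rewrite /diagX; case: existsP => [[k /andP [/eqP -> /eqP ->]] _ | _]; last by rewrite eqxx.
by exists k.
Qed.

Lemma diagX_idx (k m : 'I_t) : diagX (idxI k) (idxL m) = if m == k then 'X else 0.
Proof.
rewrite /diagX; case: existsP => [[k' /andP [/eqP /idxI_inj <- /eqP /idxL_inj ->]] | no_k].
  by rewrite eqxx.
by case: eqP => // mk; case: no_k; exists k; rewrite mk !eqxx.
Qed.

Lemma diagX_mul_eq0 i a j b :
  (forall k k' : 'I_t, i = idxI k -> a = idxL k -> j = idxI k' -> b = idxL k' -> False) ->
  diagX i a * diagX j b = 0.
Proof.
move=> no_pair; apply/eqP; rewrite mulf_eq0; apply/contraT; rewrite negb_or.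
case/andP=> /diagX_neq0 [k [ik ak]] /diagX_neq0 [k' [jk' bk']].
by case: (no_pair k k').
Qed.

Lemma diagX_rels : qM3_rels q diagX.
Proof.
split.
- move=> i a b lt_ab; rewrite mulrC diagX_mul_eq0 ?scaler0 // => k k' -> ak /idxI_inj <- bk.
  by move: lt_ab; rewrite ak bk ltnn.
- move=> i j a lt_ij; rewrite mulrC diagX_mul_eq0 ?scaler0 // => k k' ik -> jk /idxL_inj kk'.
  by move: lt_ij; rewrite ik jk kk' ltnn.
- by move=> i j a b _ _; rewrite mulrC.
- move=> i j a b lt_ij lt_ab; rewrite [diagX i b * _]diagX_mul_eq0 ?scaler0 ?subr0 1?mulrC //.
  move=> k k' ik bk jk' ak'.
  have lt_kk' : (k < k')%N.
    apply: (sorted_nth_ltn_inv (x0 := ord0) _ (sorted_idx_sorted I)).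
      exact: size_sorted_idx.
    by rewrite -ik -jk'.
  have lt_k'k : (k' < k)%N.
    apply: (sorted_nth_ltn_inv (x0 := ord0) _ (sorted_idx_sorted L)).
      by rewrite size_sorted_idx.
    by rewrite -ak' -bk.
  by have := ltn_trans lt_kk' lt_k'k; rewrite ltnn.
Qed.

Section Evaluation.
Variables (A : algType K) (Y : 'I_3 -> 'I_3 -> A) (f : {lrmorphism A -> {poly K}}).
Hypothesis fY : forall i a, f (Y i a) = diagX i a.

Lemma f_wprod w : f (wprod Y w) = 0 \/ f (wprod Y w) = 'X^(size w).
Proof.
elim: w => [|p w IH]; first by right; rewrite /wprod big_nil rmorph1.
rewrite wprod_cons rmorphM /= fY.
case: (diagX_0X p.1 p.2) => ->; first by left; rewrite mul0r.
by case: IH => ->; [left; rewrite mulr0 | right; rewrite -exprS].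
Qed.

Lemma size_f_R_lt d x : R_lt Y d x -> (size (f x) <= d)%N.
Proof.
move=> [cs [lt_cs ->]]; rewrite linear_sum; elim: cs lt_cs => [|c cs IH] /=.
  by rewrite big_nil size_poly0.
case/andP=> lt_c lt_cs; rewrite big_cons.
apply: leq_trans (size_polyD _ _) _; rewrite geq_max IH // andbT linearZZ /=.
apply: leq_trans (size_scale_leq _ _) _.
by case: (f_wprod c.2) => ->; rewrite ?size_poly0 // size_polyXn.
Qed.

Lemma f_qminor : f (qminor q Y I L) = 'X^t.
Proof.
rewrite /qminor linear_sum (bigD1 (1%g : 'S_t)) //= [X in _ + X]big1 ?addr0.
  rewrite linearZZ /= rmorph_prod perm_length1 expr0 scale1r.
  under eq_bigr => k _ do rewrite /= fY perm1 diagX_idx eqxx.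
  by rewrite prodr_const card_ord.
move=> w w_neq1; rewrite linearZZ /= rmorph_prod.
have [k wk] : exists k, w k != k.
  apply/existsP; apply: contraR w_neq1 => /existsPn fixed; apply/eqP/permP => k.
  by rewrite perm1; apply/eqP; move: (fixed k); rewrite negbK.
by rewrite (bigD1 k) //= fY diagX_idx (negbTE wk) mul0r scaler0.
Qed.

End Evaluation.
End DiagonalSpecialization.

Lemma qminor_not_R_lt (K : fieldType) (q : K) (A : algType K) (Y : 'I_3 -> 'I_3 -> A)
    (I L : {set 'I_3}) :
  is_Oq_M3 q Y -> #|L| = #|I| -> ~ R_lt Y #|I| (qminor q Y I L).
Proof.
move=> [_ _ univ] card_LI; have [f fY] := univ _ _ (diagX_rels q card_LI).
by move/(size_f_R_lt fY); rewrite (f_qminor q card_LI fY) size_polyXn ltnn.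
Qed.

Lemma R_le_qminor (K : fieldType) (q : K) (A : algType K) (Y : 'I_3 -> 'I_3 -> A)
    (I L : {set 'I_3}) :
  R_le Y #|I| (qminor q Y I L).
Proof.
apply: in_wspan_sum => w _; apply: in_wspanZ.
by apply: sub_in_wspan (in_wspan_prod_gen Y _ _) => m /eqP ->.
Qed.

Lemma deg_is_qminor (K : fieldType) (q : K) (A : algType K) (Y : 'I_3 -> 'I_3 -> A)
    (I L : {set 'I_3}) :
  is_Oq_M3 q Y -> #|L| = #|I| -> deg_is Y (qminor q Y I L) #|I|.
Proof.
move=> OqY card_LI; have not_lt := qminor_not_R_lt OqY card_LI.
split; last by split; [exact: R_le_qminor | exact: not_lt].
by apply: contra_not_neq not_lt => ->; apply: in_wspan0.
Qed.

Lemma R_ge_sigma_qminor_sub (K : fieldType) (q : K) (A : algType K)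
    (Y : 'I_3 -> 'I_3 -> A) (sigma : {lrmorphism A -> A}) (I L : {set 'I_3}) :
  (forall i a : 'I_3, R_ge Y 2 (sigma (Y i a) - Y i a)) ->
  R_ge Y #|I|.+1 (sigma (qminor q Y I L) - qminor q Y I L).
Proof.
move=> sigmaY; rewrite /qminor linear_sum -sumrB; apply: in_wspan_sum => w _.
rewrite linearZZ /= rmorph_prod -scalerBr; apply: in_wspanZ.
exact: R_ge_prod_sigma_sub.
Qed.

Theorem lemma2p1 (K : fieldType) (q : K) (A : algType K)
    (Y : 'I_3 -> 'I_3 -> A) :
  q != 0 -> (forall n : nat, (0 < n)%N -> q ^+ n != 1) ->
  is_Oq_M3 q Y ->
  forall sigma : {lrmorphism A -> A}, bijective sigma ->
  (forall i a : 'I_3, R_ge Y 2 (sigma (Y i a) - Y i a)) ->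
  forall (t : nat) (I L : {set 'I_3}), #|I| = t -> #|L| = t ->
  R_ge Y t.+1 (sigma (qminor q Y I L) - qminor q Y I L) /\
  (sigma (qminor q Y I L) = qminor q Y I L <-> deg_is Y (sigma (qminor q Y I L)) t).
Proof.
move=> q_neq0 q_not_root1 OqY sigma _ sigmaY t I L card_I card_L; subst t.
have sigmaM_sub := R_ge_sigma_qminor_sub q I L sigmaY.
have M_deg := deg_is_qminor OqY card_L; have [_ [M_le _]] := M_deg.
split=> //; split=> [-> // | [_ [sigmaM_le _]]].
apply/eqP; rewrite -subr_eq0; apply/eqP.
exact: R_le_R_ge_eq0 q_neq0 q_not_root1 OqY (in_wspanB sigmaM_le M_le) sigmaM_sub.
Qed.
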